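(* Let $D$ be an integer which is not a perfect square, let $A,B\in\mathbb{Z}$, and let $p\neq 2$ be a prime with $p\mid D$ and $p^2\nmid D$. Let $l\geq 1$ be an integer such that $p^{l+1}$ divides none of $A$, $B$, $A-B$, $G(A,B)$, where $G(A,B)=A^2-2AB+B^2-2A-2B+1$. Suppose $\mathbf{t}=(t_0,\ldots,t_4)\in(\mathbb{Z}/p^{8l+1}\mathbb{Z})^5$ has components not all divisible by $p$ and satisfies $Q_1(\mathbf{t})\equiv Q_2(\mathbf{t})\equiv 0\pmod{p^{8l+1}}$. Then $p^{4l+1}$ does not divide all $2\times 2$ minors of the Jacobian matrix of $(Q_1,Q_2)$ at $\mathbf{t}$.
   Context: $Q_1(\mathbf{t})=t_2^2-Dt_3^2-t_0t_1$ and $Q_2(\mathbf{t})=t_2^2-Dt_4^2-(t_0+At_1)(t_0+Bt_1)$. The Jacobian matrix at $\mathbf{t}$ is $\begin{pmatrix} t_1 & t_0 & -2t_2 & 2Dt_3 & 0\\ 2t_0+(A+B)t_1 & (A+B)t_0+2ABt_1 & -2t_2 & 0 & 2Dt_4\end{pmatrix}$ (up to sign conventions, the minors are those of the matrix of partial derivatives). *)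

From Stdlib Require Import ZArith Znumtheory List.
Import ListNotations.
Open Scope Z_scope.

(* t = (t0,t1,t2,t3,t4) is represented by integer lifts of its residues mod p^(8l+1). *)
Definition Q1 (D t0 t1 t2 t3 t4 : Z) : Z := t2^2 - D*t3^2 - t0*t1.
Definition Q2 (D A B t0 t1 t2 t3 t4 : Z) : Z :=
  t2^2 - D*t4^2 - (t0 + A*t1)*(t0 + B*t1).
Definition G (A B : Z) : Z := A^2 - 2*A*B + B^2 - 2*A - 2*B + 1.

Definition jac_row1 (D t0 t1 t2 t3 t4 : Z) : list Z :=
  [-t1; -t0; 2*t2; -2*D*t3; 0].
Definition jac_row2 (D A B t0 t1 t2 t3 t4 : Z) : list Z :=
  [-(2*t0 + (A+B)*t1); -((A+B)*t0 + 2*A*B*t1); 2*t2; 0; -2*D*t4].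

Definition jac_minor (D A B t0 t1 t2 t3 t4 : Z) (i j : nat) : Z :=
  let r1 := jac_row1 D t0 t1 t2 t3 t4 in
  let r2 := jac_row2 D A B t0 t1 t2 t3 t4 in
  nth i r1 0 * nth j r2 0 - nth j r1 0 * nth i r2 0.

From Stdlib Require Import ZArith Znumtheory List Lia.
Open Scope Z_scope.

(* The minors in columns (0,1), (0,2), (0,3) are, up to units, E = A B t1^2 - t0^2, t2 X
   and D t3 Y, where X = 2 t0 + (A+B-1) t1 and Y = X + t1.  If p | t1, then p | t0 by E,
   and the equations modulo p^2 together with p || D force p | t2, t3, t4.  Otherwise
   v(t0) <= 2l by E, and X, Y cannot both be divisible by p.  If X is a p-unit, then
   p^(4l+1) | t2, so Q1 reduces to D t3^2 = - t0 t1, and eliminating t3 leaves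
   p^(4l+1) | t1^3 t0 (A-B)^2.  If Y is a p-unit, then p^(4l+1) | D t3, hence
   p^(8l+1) | D t3^2 and Q1 reduces to t2^2 = t0 t1; eliminating t2 leaves
   p^(4l+1) | t1^3 t0 G(A,B).  Both contradict the valuation bounds. *)

(* [lia] encodes every divisibility hypothesis in context through [Z.modulo], which makes
   it very slow here; the exponent side conditions never need them. *)
Ltac lia_exp :=
  repeat match goal with H : context [Z.divide _ _] |- _ => clear H end; lia.

Lemma Z_pow_divide_pow (p a b : Z) : 0 <= a <= b -> (p^a | p^b).
Proof.
  intros Hab. exists (p^(b-a)). rewrite <- Z.pow_add_r by lia_exp. f_equal; lia_exp.
Qed.

Lemma Z_pow_divide_weaken (p a b x : Z) : 0 <= b <= a -> (p^a | x) -> (p^b | x).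
Proof.
  intros Hba H. apply (Z.divide_trans _ (p^a)); [apply Z_pow_divide_pow; lia_exp | exact H].
Qed.

Lemma Z_pow_divide_base (p k x : Z) : 1 <= k -> (p^k | x) -> (p | x).
Proof. intros Hk. rewrite <- (Z.pow_1_r p) at 2. now apply Z_pow_divide_weaken. Qed.

Lemma Z_divide_mul_mul (a b c e : Z) : (a | b) -> (c | e) -> (a*c | b*e).
Proof. intros [x ->] [y ->]. exists (x*y). ring. Qed.

Lemma Z_divide_lincomb3 (k a b c u v w : Z) :
  (k | a) -> (k | b) -> (k | c) -> (k | u*a + v*b + w*c).
Proof. intros Ha Hb Hc. repeat apply Z.divide_add_r; apply Z.divide_mul_r; assumption. Qed.

Section PrimePowers.

Variable p : Z.
Hypothesis Hp : prime p.

Lemma prime_not_divide_mul (u w : Z) : ~ (p | u) -> ~ (p | w) -> ~ (p | u*w).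
Proof. intros Hu Hw Huw. destruct (prime_mult p Hp u w Huw); auto. Qed.

Lemma rel_prime_prime_pow (k u : Z) : 0 <= k -> ~ (p | u) -> rel_prime (p^k) u.
Proof.
  intros Hk Hu. apply rel_prime_sym. pattern k; apply natlike_ind; auto.
  - rewrite Z.pow_0_r. apply rel_prime_sym, rel_prime_1.
  - intros x Hx IH. rewrite Z.pow_succ_r by lia_exp.
    apply rel_prime_mult; auto. apply rel_prime_sym, prime_rel_prime; auto.
Qed.

Lemma Gauss_prime_pow (k u z : Z) : 0 <= k -> ~ (p | u) -> (p^k | u*z) -> (p^k | z).
Proof. intros Hk Hu H. eapply Gauss; [exact H | apply rel_prime_prime_pow; auto]. Qed.

Lemma prime_pow_not_divide_mul (a b x y : Z) : 0 <= a -> 0 <= b ->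
  ~ (p^(a+1) | x) -> ~ (p^(b+1) | y) -> ~ (p^(a+b+1) | x*y).
Proof.
  intros Ha Hb. revert x. pattern a; apply natlike_ind; auto; clear a Ha.
  - intros x Hx Hy Hxy. apply Hy.
    apply (Gauss_prime_pow _ x); [lia_exp | now rewrite Z.pow_1_r in Hx | exact Hxy].
  - intros a Ha IH x Hx Hy Hxy.
    destruct (Zdivide_dec p x) as [[x' ->] | Hpx].
    + assert (Hp0 : p <> 0) by (apply prime_ge_2 in Hp; lia_exp).
      apply (IH x').
      * intros Hx'. apply Hx. replace (Z.succ a + 1) with (Z.succ (a + 1)) by lia_exp.
        rewrite Z.pow_succ_r, (Z.mul_comm x') by lia_exp. now apply Z.mul_divide_mono_l.
      * exact Hy.
      * replace (Z.succ a + b + 1) with (Z.succ (a + b + 1)) in Hxy by lia_exp.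
        rewrite Z.pow_succ_r, (Z.mul_comm x' p), <- Z.mul_assoc in Hxy by lia_exp.
        now apply Z.mul_divide_cancel_l in Hxy.
    + apply Hy. apply (Z_pow_divide_weaken _ (Z.succ a + b + 1)); [lia_exp|].
      now apply (Gauss_prime_pow _ x); [lia_exp | |].
Qed.

Lemma prime_divide_of_exact_mul_sq (D x : Z) :
  (p | D) -> ~ (p^2 | D) -> (p^2 | D * x^2) -> (p | x).
Proof.
  intros [d ->] HD H.
  assert (Hd : ~ (p | d)) by (intros [e ->]; apply HD; exists e; ring).
  assert (Hp0 : p <> 0) by (apply prime_ge_2 in Hp; lia_exp).
  replace (d * p * x^2) with (p * (d * x * x)) in H by ring.
  rewrite Z.pow_2_r in H. apply Z.mul_divide_cancel_l in H; [|exact Hp0].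
  destruct (prime_mult p Hp _ _ H) as [Hdx | Hx]; [|exact Hx].
  destruct (prime_mult p Hp _ _ Hdx); tauto.
Qed.

End PrimePowers.

Lemma odd_prime_not_divide_2 (p : Z) : prime p -> p <> 2 -> ~ (p | 2).
Proof.
  intros Hp Hp2 H. apply Z.divide_pos_le in H; [|lia_exp].
  apply prime_ge_2 in Hp. lia_exp.
Qed.

Lemma jac_minor01 (D A B t0 t1 t2 t3 t4 : Z) :
  jac_minor D A B t0 t1 t2 t3 t4 0 1 = 2 * (A*B*t1^2 - t0^2).
Proof. unfold jac_minor, jac_row1, jac_row2; cbn [nth]; ring. Qed.

Lemma jac_minor02 (D A B t0 t1 t2 t3 t4 : Z) :
  jac_minor D A B t0 t1 t2 t3 t4 0 2 = 2 * (t2 * (2*t0 + (A+B-1)*t1)).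
Proof. unfold jac_minor, jac_row1, jac_row2; cbn [nth]; ring. Qed.

Lemma jac_minor03 (D A B t0 t1 t2 t3 t4 : Z) :
  jac_minor D A B t0 t1 t2 t3 t4 0 3 = -2 * (D*t3 * (2*t0 + (A+B)*t1)).
Proof. unfold jac_minor, jac_row1, jac_row2; cbn [nth]; ring. Qed.

Lemma Q1_Q2_zero_mod_sq_primitive (D A B p t0 t1 t2 t3 t4 : Z) :
  prime p -> (p | D) -> ~ (p^2 | D) -> (p | t0) -> (p | t1) ->
  (p^2 | Q1 D t0 t1 t2 t3 t4) -> (p^2 | Q2 D A B t0 t1 t2 t3 t4) ->
  (p | t2) /\ (p | t3) /\ (p | t4).
Proof.
  intros Hp HD HD2 H0 H1 HQ1 HQ2. unfold Q1, Q2 in *.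
  assert (Hpp : (p | p^2)) by (exists p; ring).
  assert (H2 : (p | t2)).
  { assert (H22 : (p | t2 * t2)).
    { replace (t2 * t2) with (1 * (t2^2 - D*t3^2 - t0*t1) + t3^2 * D + t1 * t0) by ring.
      apply Z_divide_lincomb3; [eapply Z.divide_trans|..]; eassumption. }
    now destruct (prime_mult p Hp _ _ H22). }
  assert (Hsq : forall x y, (p | x) -> (p | y) -> (p^2 | x * y))
    by (intros x y Hx Hy; rewrite Z.pow_2_r; now apply Z_divide_mul_mul).
  assert (Hlin : forall c, (p | t0 + c*t1))
    by (intro c; apply Z.divide_add_r; [|apply Z.divide_mul_r]; assumption).
  split; [exact H2 | split]; apply (prime_divide_of_exact_mul_sq p Hp D); auto.
  - replace (D*t3^2) with ((-1) * (t2^2 - D*t3^2 - t0*t1) + 1 * (t2*t2) + (-1) * (t0*t1))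
      by ring.
    apply Z_divide_lincomb3; auto.
  - replace (D*t4^2) with ((-1) * (t2^2 - D*t4^2 - (t0 + A*t1)*(t0 + B*t1))
                           + 1 * (t2*t2) + (-1) * ((t0 + A*t1)*(t0 + B*t1))) by ring.
    apply Z_divide_lincomb3; auto.
Qed.

Lemma prime_divide_t0_of_t1 (A B p k t0 t1 : Z) : prime p -> 1 <= k ->
  (p^k | A*B*t1^2 - t0^2) -> (p | t1) -> (p | t0).
Proof.
  intros Hp Hk HE Ht1.
  assert (Ht00 : (p | t0 * t0)).
  { replace (t0 * t0) with ((-1) * (A*B*t1^2 - t0^2) + (A*B*t1) * t1 + 0 * 0) by ring.
    apply Z_divide_lincomb3; [|exact Ht1 | apply Z.divide_0_r].
    now apply (Z_pow_divide_base _ k). }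
  now destruct (prime_mult p Hp _ _ Ht00).
Qed.

Section UnitT1.

Variables D A B p l t0 t1 t2 t3 t4 : Z.
Hypothesis Hp : prime p.
Hypothesis Hl : 1 <= l.
Hypothesis HA : ~ (p^(l+1) | A).
Hypothesis HB : ~ (p^(l+1) | B).
Hypothesis Ht1 : ~ (p | t1).
Hypothesis HQ1 : (p^(8*l+1) | Q1 D t0 t1 t2 t3 t4).
Hypothesis HE : (p^(4*l+1) | A*B*t1^2 - t0^2).
Hypothesis HX : (p^(4*l+1) | t2 * (2*t0 + (A+B-1)*t1)).
Hypothesis HY : (p^(4*l+1) | D*t3 * (2*t0 + (A+B)*t1)).

Let t1_cube_unit : ~ (p | t1*t1*t1).
Proof. repeat apply prime_not_divide_mul; auto. Qed.

Lemma t0_valuation_le : ~ (p^(2*l+1) | t0).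
Proof.
  intros H0.
  apply (prime_pow_not_divide_mul p Hp l l A B); [lia_exp | lia_exp | exact HA | exact HB |].
  apply (Gauss_prime_pow p Hp _ (t1*t1)); [lia_exp | apply prime_not_divide_mul; auto|].
  replace (t1*t1*(A*B)) with (1 * (A*B*t1^2 - t0^2) + t0 * t0 + 0 * 0) by ring.
  apply Z_divide_lincomb3.
  - apply (Z_pow_divide_weaken _ (4*l+1)); [lia_exp | exact HE].
  - now replace (l+l+1) with (2*l+1) by lia_exp.
  - apply Z.divide_0_r.
Qed.

Lemma prime_divide_X (HAB : ~ (p^(l+1) | A - B)) : (p | 2*t0 + (A+B-1)*t1).
Proof.
  destruct (Zdivide_dec p (2*t0 + (A+B-1)*t1)) as [HXp | HXu]; [exact HXp | exfalso].
  assert (Ht2 : (p^(4*l+1) | t2)).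
  { apply (Gauss_prime_pow p Hp _ (2*t0 + (A+B-1)*t1)); [lia_exp | exact HXu |].
    rewrite (Z.mul_comm (2*t0 + _)). exact HX. }
  assert (Ht3 : (p^(8*l+1) | D*t3^2 + t0*t1)).
  { replace (D*t3^2 + t0*t1) with (t2*t2 - Q1 D t0 t1 t2 t3 t4) by (unfold Q1; ring).
    apply Z.divide_sub_r; [|exact HQ1].
    replace (8*l+1) with ((4*l+1) + 4*l) by lia_exp. rewrite Z.pow_add_r by lia_exp.
    apply Z_divide_mul_mul; [exact Ht2|].
    apply (Z_pow_divide_weaken _ (4*l+1)); [lia_exp | exact Ht2]. }
  assert (Hk : (p^(4*l+1) | t1*t1*t1 * (t0*((A-B)*(A-B))))).
  { replace (t1*t1*t1 * (t0*((A-B)*(A-B)))) with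
      ((A-B)^2*t1^2 * (D*t3^2 + t0*t1)
       + (-(t3*((2*t0 + (A+B)*t1) - 4*t0))) * (D*t3 * (2*t0 + (A+B)*t1))
       + (4*D*t3^2) * (A*B*t1^2 - t0^2)) by ring.
    apply Z_divide_lincomb3; auto.
    apply (Z_pow_divide_weaken _ (8*l+1)); [lia_exp | exact Ht3]. }
  apply (Gauss_prime_pow p Hp) in Hk; [|lia_exp | exact t1_cube_unit].
  revert Hk. replace (4*l+1) with (2*l + 2*l + 1) by lia_exp.
  apply (prime_pow_not_divide_mul p Hp); [lia_exp | lia_exp | exact t0_valuation_le |].
  replace (2*l+1) with (l+l+1) by lia_exp.
  apply (prime_pow_not_divide_mul p Hp); [lia_exp | lia_exp | exact HAB | exact HAB].
Qed.

Lemma prime_divide_Y (HD : (p | D)) (HD2 : ~ (p^2 | D)) (HG : ~ (p^(l+1) | G A B)) :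
  (p | 2*t0 + (A+B)*t1).
Proof.
  destruct (Zdivide_dec p (2*t0 + (A+B)*t1)) as [HYp | HYu]; [exact HYp | exfalso].
  assert (Hp0 : p <> 0) by (apply prime_ge_2 in Hp; lia_exp).
  destruct HD as [d HDd].
  assert (Hd : ~ (p | d)) by (intros [e He]; apply HD2; exists e; rewrite HDd, He; ring).
  assert (Ht3 : (p^(4*l+1) | D*t3)).
  { apply (Gauss_prime_pow p Hp _ (2*t0 + (A+B)*t1)); [lia_exp | exact HYu |].
    rewrite (Z.mul_comm (2*t0 + _)). exact HY. }
  assert (Ht3sq : (p^(8*l+1) | D*t3^2)).
  { apply (Gauss_prime_pow p Hp _ d); [lia_exp | exact Hd |].
    apply (Z.mul_divide_cancel_l _ _ p); [exact Hp0|].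
    replace (p * p^(8*l+1)) with (p^(4*l+1) * p^(4*l+1))
      by (rewrite <- Z.pow_add_r, <- Z.pow_succ_r by lia_exp; f_equal; lia_exp).
    replace (p * (d * (D*t3^2))) with ((D*t3) * (D*t3)) by (rewrite HDd; ring).
    now apply Z_divide_mul_mul. }
  assert (Ht2 : (p^(8*l+1) | t2^2 - t0*t1)).
  { replace (t2^2 - t0*t1) with (Q1 D t0 t1 t2 t3 t4 + D*t3^2) by (unfold Q1; ring).
    now apply Z.divide_add_r. }
  assert (Hk : (p^(4*l+1) | t1*t1*t1 * (t0 * G A B))).
  { replace (t1*t1*t1 * (t0 * G A B)) with
      ((-(G A B*t1^2)) * (t2^2 - t0*t1)
       + (t2*((2*t0 + (A+B-1)*t1) - 4*t0)) * (t2 * (2*t0 + (A+B-1)*t1))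
       + (-4*t2^2) * (A*B*t1^2 - t0^2)) by (unfold G; ring).
    apply Z_divide_lincomb3; auto.
    apply (Z_pow_divide_weaken _ (8*l+1)); [lia_exp | exact Ht2]. }
  apply (Gauss_prime_pow p Hp) in Hk; [|lia_exp | exact t1_cube_unit].
  apply (prime_pow_not_divide_mul p Hp (2*l) l t0 (G A B));
    [lia_exp | lia_exp | exact t0_valuation_le | exact HG |].
  apply (Z_pow_divide_weaken _ (4*l+1)); [lia_exp | exact Hk].
Qed.

End UnitT1.

Theorem lemma2p2 (D A B p l t0 t1 t2 t3 t4 : Z) :
  (~ exists m : Z, D = m * m) ->
  prime p -> p <> 2 -> (p | D) -> ~ (p^2 | D) ->
  1 <= l ->
  ~ (p^(l+1) | A) -> ~ (p^(l+1) | B) -> ~ (p^(l+1) | A - B) ->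
  ~ (p^(l+1) | G A B) ->
  ~ ((p | t0) /\ (p | t1) /\ (p | t2) /\ (p | t3) /\ (p | t4)) ->
  (p^(8*l+1) | Q1 D t0 t1 t2 t3 t4) ->
  (p^(8*l+1) | Q2 D A B t0 t1 t2 t3 t4) ->
  ~ (forall i j : nat, (i < j < 5)%nat ->
       (p^(4*l+1) | jac_minor D A B t0 t1 t2 t3 t4 i j)).
Proof.
  intros _ Hp Hp2 HD HD2 Hl HA HB HAB HG Ht HQ1 HQ2 Hm.
  pose proof (odd_prime_not_divide_2 p Hp Hp2) as H2.
  assert (HE : (p^(4*l+1) | A*B*t1^2 - t0^2)).
  { apply (Gauss_prime_pow p Hp _ 2); [lia_exp | exact H2 |].
    rewrite <- (jac_minor01 D A B t0 t1 t2 t3 t4). apply Hm; lia_exp. }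
  assert (HX : (p^(4*l+1) | t2 * (2*t0 + (A+B-1)*t1))).
  { apply (Gauss_prime_pow p Hp _ 2); [lia_exp | exact H2 |].
    rewrite <- (jac_minor02 D A B t0 t1 t2 t3 t4). apply Hm; lia_exp. }
  assert (HY : (p^(4*l+1) | D*t3 * (2*t0 + (A+B)*t1))).
  { apply (Gauss_prime_pow p Hp _ (-2)); [lia_exp | now rewrite <- Z.divide_opp_r |].
    rewrite <- (jac_minor03 D A B t0 t1 t2 t3 t4). apply Hm; lia_exp. }
  destruct (Zdivide_dec p t1) as [Ht1 | Ht1].
  - assert (Ht0 : (p | t0))
      by (apply (prime_divide_t0_of_t1 A B p (4*l+1) t0 t1); auto; lia_exp).
    apply Ht. repeat split; auto;
      apply (Q1_Q2_zero_mod_sq_primitive D A B p t0 t1 t2 t3 t4); auto;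
      apply (Z_pow_divide_weaken _ (8*l+1)); auto; lia_exp.
  - apply Ht1. replace t1 with ((2*t0 + (A+B)*t1) - (2*t0 + (A+B-1)*t1)) by ring.
    apply Z.divide_sub_r.
    + now apply (prime_divide_Y D A B p l t0 t1 t2 t3 t4).
    + now apply (prime_divide_X D A B p l t0 t1 t2 t3 t4).
Qed.
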